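(* Let $b<1/2$, $c>0$, and let $f$ be a real-valued function on $[1,\infty)$ with $f(x)\le c\,x^b$ for all $x\ge 1$. Then there is a constant $C$ depending only on $c$ and $b$ such that for every integer $N\ge 2$, $$ \sum_{1\le j\le \pi(N)} p_j^{-1/2} f(N/p_j) \le \frac{C\,N^{1/2}}{\log N}, $$ where $p_1=2<p_2<\dots$ is the increasing sequence of all primes and $\pi(N)$ is the number of primes $\le N$. *)

From HB Require Import structures.
From mathcomp Require Import all_boot all_order all_algebra.
From mathcomp Require Import all_classical all_reals all_analysis.
Set Implicit Arguments. Unset Strict Implicit. Unset Printing Implicit Defensive.

From HB Require Import structures.
From mathcomp Require Import all_boot all_order all_algebra.
From mathcomp Require Import all_classical all_reals all_analysis.
From mathcomp Require Import ring lra zify.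
Import Order.TTheory GRing.Theory Num.Theory.

(* Chebyshev: the primes in (m+1, 2m+1] divide C(2m+1, m) <= 4^m, so the product
   of the primes up to n is at most 4^n, i.e. sum_{p <= N} ln p <= N ln 4.  Summing
   this over dyadic blocks (N/2, N] gives sum_{p <= N} p^(s-1) ln p <= K_s N^s for
   every s > 0.  With e = 1/2 - b, the p-th term is at most c N^(1/2) (p/N)^e / p.
   Writing ln N = ln p + ln (N/p) and using x^e ln (1/x) <= (2/e) x^(e/2) for
   x = p/N <= 1, together with 1 <= ln p / ln 2, gives
   ln N * sum_{p <= N} (p/N)^e / p <= K_e + 2/(e ln 2) K_(e/2). *)

Lemma prime_dvd_fact p n : prime p -> (p %| n`!) = (p <= n).
Proof.
move=> p_pr; elim: n => [|n IHn]; first by rewrite dvdn1 leqn0; case: p p_pr => [|[|]].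
rewrite factS Euclid_dvdM // IHn; have [p_le_n | n_lt_p] := leqP p n.
  by rewrite orbT (leq_trans p_le_n).
rewrite orbF; apply/idP/idP => [/dvdn_leq -> // | p_le].
by rewrite (_ : p = n.+1) //; apply/eqP; rewrite eqn_leq p_le.
Qed.

Lemma primorial_dvd_mid_binomial m :
  \prod_(m.+2 <= p < (2 * m).+2 | prime p) p %| 'C((2 * m).+1, m).
Proof.
have split_fact : 'C((2 * m).+1, m) * m`! = \prod_(m.+2 <= k < (2 * m).+2) k.
  have m_le : m <= (2 * m).+1 by lia.
  move: (bin_fact m_le); rewrite (_ : (2 * m).+1 - m = m.+1); last lia.
  rewrite (@fact_split (2 * m).+1 m.+1); last lia.
  by rewrite mulnA [_ * _.+1`!]mulnC => /eqP; rewrite eqn_pmul2l ?fact_gt0 // => /eqP.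
have coprime_fact : coprime (\prod_(m.+2 <= p < (2 * m).+2 | prime p) p) m`!.
  rewrite big_nat_cond; apply: (big_ind (coprime^~ m`!)) => [|x y|p /andP[/andP[lo _] p_pr]].
  - exact: coprime1n.
  - by rewrite coprimeMl => -> ->.
  by rewrite prime_coprime // prime_dvd_fact // -ltnNge; apply: leq_trans lo.
rewrite -(Gauss_dvdl _ coprime_fact) split_fact big_mkcond /=.
by apply: (big_ind2 dvdn) => [//|a b c d|k _]; [exact: dvdn_mul | case: ifP].
Qed.

Lemma mid_binomial_le m : 'C((2 * m).+1, m) <= 4 ^ m.
Proof.
have binS_sym : 'C((2 * m).+1, m.+1) = 'C((2 * m).+1, m).
  by rewrite -bin_sub; [congr binomial | ]; lia.
have sum_bin : \sum_(0 <= i < (2 * m).+2) 'C((2 * m).+1, i) = 2 ^ (2 * m).+1.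
  rewrite big_mkord -[2]/(1 + 1) expnDn.
  by apply: eq_bigr => i _; rewrite !exp1n !muln1.
have : 'C((2 * m).+1, m) + 'C((2 * m).+1, m.+1) <= 2 ^ (2 * m).+1.
  rewrite -sum_bin (@big_cat_nat _ _ _ m) //=; last lia.
  rewrite [X in _ <= _ + X]big_ltn; last lia.
  by rewrite [X in _ <= _ + (_ + X)]big_ltn; lia.
by rewrite binS_sym addnn -mul2n expnS leq_pmul2l // expnM.
Qed.

Lemma primorial_le n : \prod_(0 <= p < n.+1 | prime p) p <= 4 ^ n.
Proof.
elim/ltn_ind: n => n IHn; have := odd_double_half n; set m := n./2.
case: (odd n) => def_n; rewrite -{}def_n -mul2n ?add0n ?add1n in IHn *; clearbody m.
  have [-> | m_gt0] := posnP m; first by rewrite unlock.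
  rewrite (@big_cat_nat _ _ _ m.+2) //=; try lia.
  have low := IHn m.+1 ltac:(lia).
  have high : \prod_(m.+2 <= p < (2 * m).+2 | prime p) p <= 4 ^ m.
    apply: leq_trans (mid_binomial_le m); apply: dvdn_leq.
      by rewrite bin_gt0; lia.
    exact: primorial_dvd_mid_binomial.
  by apply: leq_trans (leq_mul low high) _; rewrite -expnD leq_exp2l //; lia.
have [-> | m_gt0] := posnP m; first by rewrite unlock.
rewrite big_mkcond big_nat_recr //= -big_mkcond.
have [m_le1 | m_gt1] := leqP m 1.
  by rewrite (_ : m = 1) ?unlock //; lia.
have /negbTE-> : ~~ prime (2 * m).
  by apply/negP => /even_prime[|]; [lia | rewrite oddM].
rewrite muln1 {1}(_ : 2 * m = (2 * m).-1.+1); last lia.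
by apply: leq_trans (IHn _ _) _; rewrite ?leq_exp2l //; lia.
Qed.

Local Open Scope ring_scope.

Section PrimeSums.
Variable R : realType.

Lemma powR_div (x y r : R) : 0 <= x -> 0 <= y -> (x / y) `^ r = x `^ r / y `^ r.
Proof.
by move=> x_ge0 y_ge0; rewrite powRM ?invr_ge0 // -powR_inv1 // -powRrM mulN1r powRN.
Qed.

Lemma powR_Nhalf_mul_ratio (b u M : R) : 0 < u -> 0 < M ->
  u `^ (- (1 / 2)) * (M / u) `^ b = M `^ (1 / 2) * ((u / M) `^ (1 / 2 - b) / u).
Proof.
move=> u_gt0 M_gt0; rewrite /powR !gt_eqF ?divr_gt0 // !ln_div ?posrE //.
have -> : u^-1 = expR (- ln u) by rewrite expRN lnK.
by rewrite -!expRD; congr expR; field.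
Qed.

Lemma powR_mul_lnN_le (x a : R) : 0 < x -> 0 < a ->
  x `^ (2 * a) * - ln x <= x `^ a / a.
Proof.
move=> x_gt0 a_gt0; set t := x `^ a; have t_gt0 : 0 < t by exact: powR_gt0.
have -> : x `^ (2 * a) = t * t by rewrite mulrC powRrM powR_mulrn ?powR_ge0 // expr2.
have -> : - ln x = ln t^-1 / a by rewrite lnV ?posrE // ln_powR; field; rewrite gt_eqF.
rewrite mulrA ler_pM2r ?invr_gt0 // -mulrA ger_pMr //.
by rewrite -(mulfV (lt0r_neq0 t_gt0)) ler_pM2l // ltW // ln_sublinear ?invr_gt0.
Qed.

Lemma ratio_powR_mul_ln_le (e u M : R) : 0 < e -> 2 <= u -> u <= M ->
  (u / M) `^ e * ln M
    <= (u / M) `^ e * ln u + 2 / (e * ln 2) * ((u / M) `^ (e / 2) * ln u).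
Proof.
move=> e_gt0 u_ge2 u_leM; have u_gt0 : 0 < u by lra.
have M_gt0 : 0 < M by lra.
have ln2_gt0 : 0 < ln (2 : R) by rewrite ln_gt0 //; lra.
have ln2_le : ln 2 <= ln u by rewrite ler_ln ?posrE //; lra.
set x := u / M; have x_gt0 : 0 < x by rewrite divr_gt0.
have -> : ln M = ln u + - ln x by rewrite /x ln_div ?posrE //; ring.
rewrite mulrDr lerD2l.
have := powR_mul_lnN_le _ _ x_gt0 (divr_gt0 e_gt0 (ltr0Sn _ 1)).
rewrite (_ : 2 * (e / 2) = e); last by field.
move/le_trans; apply.
rewrite (_ : _ * (_ * ln u) = x `^ (e / 2) / (e / 2) * (ln u / ln 2)); last first.
  by field; rewrite !gt_eqF.
apply: ler_peMr; first by rewrite !divr_ge0 ?powR_ge0 ?(ltW e_gt0).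
by rewrite ler_pdivlMr // mul1r.
Qed.

Lemma sum_ln_primes_le N :
  \sum_(0 <= p < N.+1 | prime p) ln (p%:R : R) <= N%:R * ln 4.
Proof.
rewrite -ler_expR expR_sum (eq_bigr (fun p => p%:R)); last first.
  by move=> p p_pr; rewrite lnK // posrE ltr0n prime_gt0.
by rewrite -natr_prod expRM_natl lnK ?posrE // -natrX ler_nat primorial_le.
Qed.

Lemma sum_powR_ln_primes_upper_half (s : R) N : 0 <= s ->
  \sum_(N./2.+1 <= p < N.+1 | prime p) p%:R `^ s / p%:R * ln (p%:R : R)
    <= 2 * ln 4 * N%:R `^ s.
Proof.
move=> s_ge0; have [->|N_gt0] := posnP N.
  by rewrite big_geq // mulr_ge0 ?powR_ge0 // mulr_ge0 // ln_ge0 // ler1n.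
have Nr_gt0 : (0 : R) < N%:R by rewrite ltr0n.
have term_le p : (N./2 < p <= N)%N -> prime p ->
    p%:R `^ s / p%:R * ln (p%:R : R) <= 2 * N%:R `^ s / N%:R * ln (p%:R : R).
  move=> /andP[lo hi] p_pr; have p_gt0 : (0 : R) < p%:R by rewrite ltr0n prime_gt0.
  rewrite ler_wpM2r ?ln_ge0 ?ler1n ?prime_gt0 // -mulrA [X in _ <= X]mulrC -mulrA.
  apply: ler_pM; rewrite ?powR_ge0 ?invr_ge0 ?(ltW p_gt0) //.
    by apply: ge0_ler_powR; rewrite ?nnegrE ?ler_nat ?(ltW p_gt0) ?(ltW Nr_gt0).
  rewrite mulrC -div1r ler_pdivlMr // mulrAC ler_pdivrMr // mul1r -natrM ler_nat; lia.
have block_ln : \sum_(N./2.+1 <= p < N.+1 | prime p) ln (p%:R : R) <= N%:R * ln 4.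
  apply: le_trans (sum_ln_primes_le N).
  rewrite [X in _ <= X](@big_cat_nat _ _ _ N./2.+1) //=; try lia.
  by rewrite lerDr sumr_ge0 // => p p_pr; rewrite ln_ge0 // ler1n prime_gt0.
apply: le_trans (_ : _ <= \sum_(N./2.+1 <= p < N.+1 | prime p)
    2 * N%:R `^ s / N%:R * ln (p%:R : R)) _.
  rewrite big_nat_cond [X in _ <= X]big_nat_cond.
  by apply: ler_sum => p /andP[range p_pr]; exact: term_le.
rewrite -mulr_sumr; apply: le_trans (ler_wpM2l _ block_ln) _.
  by rewrite divr_ge0 ?mulr_ge0 ?powR_ge0 ?ltW.
by rewrite [X in X <= _](_ : _ = 2 * ln 4 * N%:R `^ s) //; field; rewrite gt_eqF.
Qed.

Lemma sum_powR_ln_primes_le (s : R) : 0 < s -> exists K : R, forall N,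
  \sum_(0 <= p < N.+1 | prime p) p%:R `^ s / p%:R * ln (p%:R : R) <= K * N%:R `^ s.
Proof.
move=> s_gt0; set q := 2^-1 `^ s.
have q_lt1 : q < 1.
  rewrite (_ : 1 = 1 `^ s); last by rewrite powR1.
  by rewrite gt0_ltr_powR ?nnegrE ?invr_ge0 ?invf_lt1 ?ltr1n.
have ln4_ge0 : (0 : R) <= ln 4 by rewrite ln_ge0 // ler1n.
(* The fixed point of K |-> q K + 2 ln 4, so that the dyadic induction closes. *)
set K := 2 * ln 4 / (1 - q).
have K_ge0 : 0 <= K by rewrite divr_ge0 ?mulr_ge0 // subr_ge0 ltW.
have K_fix : K * q + 2 * ln 4 = K by rewrite /K; field; rewrite subr_eq0 gt_eqF.
exists K => N; elim/ltn_ind: N => N IHN.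
have [->|N_gt0] := posnP N; first by rewrite big_mkcond big_nat1 /= mulr_ge0 // powR_ge0.
rewrite (@big_cat_nat _ _ _ N./2.+1) //=; try lia.
have half_le : (N./2)%:R `^ s <= q * N%:R `^ s.
  rewrite /q -powRM ?invr_ge0 //; apply: ge0_ler_powR; rewrite ?nnegrE ?(ltW s_gt0) //.
  have : ((N./2 * 2)%N%:R : R) <= N%:R by rewrite ler_nat; lia.
  by rewrite natrM; lra.
have := IHN N./2 ltac:(lia); have := sum_powR_ln_primes_upper_half _ N (ltW s_gt0).
have := powR_ge0 (N%:R : R) s; nra.
Qed.

Lemma sum_ratio_powR_ln_primes_le (s : R) : 0 < s ->
  exists K : R, forall N, (0 < N)%N ->
  \sum_(0 <= p < N.+1 | prime p) (p%:R / N%:R) `^ s * ln (p%:R : R) / p%:R <= K.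
Proof.
move=> s_gt0; have [K sumK] := sum_powR_ln_primes_le _ s_gt0; exists K => N N_gt0.
have Ns_gt0 : 0 < N%:R `^ s by rewrite powR_gt0 // ltr0n.
rewrite -(ler_pM2r Ns_gt0) mulr_suml.
rewrite (eq_bigr (fun p => p%:R `^ s / p%:R * ln (p%:R : R))) ?sumK // => p p_pr.
by rewrite powR_div //; field; rewrite pnatr_eq0 -lt0n prime_gt0 // gt_eqF.
Qed.

Lemma sum_ratio_powR_primes_le (e : R) : 0 < e ->
  exists D : R, forall N, (2 <= N)%N ->
  \sum_(0 <= p < N.+1 | prime p) (p%:R / N%:R) `^ e / p%:R <= D / ln (N%:R : R).
Proof.
move=> e_gt0; have [K1 sumK1] := sum_ratio_powR_ln_primes_le _ e_gt0.
have [K2 sumK2] := sum_ratio_powR_ln_primes_le _ (divr_gt0 e_gt0 (ltr0Sn _ 1)).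
exists (K1 + 2 / (e * ln 2) * K2) => N N_ge2.
have lnN_gt0 : 0 < ln (N%:R : R) by rewrite ln_gt0 // ltr1n.
rewrite ler_pdivlMr // mulr_suml.
have c_ge0 : 0 <= 2 / (e * ln (2 : R)).
  by rewrite divr_ge0 // mulr_ge0 ?(ltW e_gt0) // ln_ge0 // ler1n.
apply: le_trans (lerD (sumK1 N _) (ler_wpM2l c_ge0 (sumK2 N _))); try lia.
rewrite mulr_sumr -big_split [X in X <= _]big_nat_cond [X in _ <= X]big_nat_cond /=.
apply: ler_sum => p /andP[p_le p_pr].
have p_gt0 : (0 : R) < p%:R by rewrite ltr0n prime_gt0.
have p_ge2 : 2 <= (p%:R : R) by rewrite ler_nat prime_gt1.
have p_leN : (p%:R : R) <= N%:R by rewrite ler_nat -ltnS.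
have pV_ge0 : 0 <= p%:R^-1 :> R by rewrite invr_ge0 ltW.
have := ler_wpM2r pV_ge0 (ratio_powR_mul_ln_le _ _ _ e_gt0 p_ge2 p_leN).
set x := p%:R / N%:R; set c := 2 / _.
by rewrite mulrAC mulrDl -[c * _ / _]mulrA.
Qed.

End PrimeSums.

Theorem lemma2p1 (R : realType) (b c : R) (hb : b < 1 / 2) (hc : 0 < c) :
  exists C : R, forall f : R -> R,
    (forall x : R, 1 <= x -> f x <= c * x `^ b) ->
    forall N : nat, (2 <= N)%N ->
      \sum_(p < N.+1 | prime p) (p%:R `^ (- (1 / 2))) * f (N%:R / p%:R)
        <= C * N%:R `^ (1 / 2) / ln (N%:R : R).
Proof.
have e_gt0 : 0 < 1 / 2 - b by rewrite subr_gt0.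
have [D sumD] := @sum_ratio_powR_primes_le R _ e_gt0.
exists (c * D) => f f_le N N_ge2; have N_gt0 : (0 : R) < N%:R by rewrite ltr0n; lia.
apply: le_trans (_ : _ <= \sum_(p < N.+1 | prime p)
    c * N%:R `^ (1 / 2) * ((p%:R / N%:R) `^ (1 / 2 - b) / p%:R)) _.
  apply: ler_sum => p p_pr; have p_gt0 : (0 : R) < p%:R by rewrite ltr0n prime_gt0.
  rewrite -mulrA -powR_Nhalf_mul_ratio // mulrCA ler_wpM2l ?powR_ge0 // f_le //.
  by rewrite ler_pdivlMr // mul1r ler_nat -ltnS.
have := sumD N N_ge2; rewrite big_mkord => sumN.
by rewrite -mulr_sumr mulrAC -!mulrA ler_pM2l // mulrCA mulrC ler_pM2l ?powR_gt0.
Qed.
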